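(* Let $R$ be an $n$-torsion clean ring (respectively, a strongly $n$-torsion clean ring). Then there exist finitely many elements $r_1,\ldots,r_k\in R$ with clean (respectively, strongly clean) decompositions $r_i=e_i+u_i$, $1\leq i\leq k$, such that $n=\mathrm{LCM}(o(u_1),\ldots,o(u_k))$. In particular: (1) if the unit group $U(R)$ has finite exponent $s$, then $n$ divides $s$; (2) if $R$ is commutative, then $U(R)$ contains an element of order $n$.
   Context: All rings are associative with identity. $o(u)$ denotes the order of a unit $u$ in $U(R)$. A clean decomposition of $r$ is $r=e+u$ with $e$ idempotent and $u$ a unit; it is strongly clean if also $eu=ue$. A ring $R$ is (strongly) $n$-torsion clean if every $r\in R$ can be written $r=e+u$ with $e^2=e$, $u\in U(R)$, $u^n=1$ (and $eu=ue$ in the strong case), and $n$ is the smallest natural number with this property. *)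

From HB Require Import structures.
From mathcomp Require Import all_boot all_order all_algebra.
Set Implicit Arguments. Unset Strict Implicit. Unset Printing Implicit Defensive.
Import GRing.Theory.
Local Open Scope ring_scope.

Definition idempotent_el (R : unitRingType) (e : R) : Prop := e * e = e.

Definition torsion_clean_with (strong : bool) (R : unitRingType) (m : nat) : Prop :=
  forall r : R, exists e u : R,
    [/\ idempotent_el e, u \is a GRing.unit, u ^+ m = 1, r = e + u
      & (strong -> e * u = u * e)].

Definition torsion_clean (strong : bool) (R : unitRingType) (n : nat) : Prop :=
  [/\ (0 < n)%N, torsion_clean_with strong R n
    & forall m : nat, (0 < m)%N -> torsion_clean_with strong R m -> (n <= m)%N].

Definition unit_order (R : unitRingType) (u : R) (k : nat) : Prop :=
  [/\ (0 < k)%N, u ^+ k = 1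
    & forall m : nat, (0 < m)%N -> u ^+ m = 1 -> (k <= m)%N].

Definition unit_exponent (R : unitRingType) (s : nat) : Prop :=
  [/\ (0 < s)%N, (forall u : R, u \is a GRing.unit -> u ^+ s = 1)
    & forall m : nat, (0 < m)%N ->
        (forall u : R, u \is a GRing.unit -> u ^+ m = 1) -> (s <= m)%N].

(* Let D be the set of orders o(u) dividing n of the units u occurring in
   (strongly) clean decompositions e + u. Every r has such a decomposition with
   u^n = 1, and the order of that u lies in D, so R is (strongly) L-torsion
   clean for L = lcm D; minimality of n and L | n give n = L. An exponent of
   U(R) is a common multiple of D, and in a commutative ring suitable powers of
   units of orders a and b multiply to a unit of order lcm(a, b). *)
From HB Require Import structures.
From mathcomp Require Import all_boot all_order all_algebra.
From Stdlib Require Import Classical IndefiniteDescription.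
Import GRing.Theory.
Set Implicit Arguments. Unset Strict Implicit.
Local Open Scope ring_scope.

Section UnitOrder.

Variable R : unitRingType.
Implicit Types x y : R.

Lemma unit_order_dvd x a m : unit_order x a -> x ^+ m = 1 -> (a %| m)%N.
Proof.
case=> a_gt0 xa a_min xm; have x_mod : x ^+ (m %% a) = 1.
  by move: xm; rewrite {1}(divn_eq m a) exprD mulnC exprM xa expr1n mul1r.
rewrite /dvdn; case Em: (m %% a)%N => [//|k].
by have := a_min _ (ltn0Sn k); rewrite -Em leqNgt ltn_pmod // => /(_ x_mod).
Qed.

Lemma unit_order_exists x m : (0 < m)%N -> x ^+ m = 1 -> exists a, unit_order x a.
Proof.
move=> m_gt0 xm; have ex : exists k, (0 < k)%N && (x ^+ k == 1).
  by exists m; rewrite m_gt0 xm eqxx.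
exists (ex_minn ex); case: ex_minnP => a /andP[a_gt0 /eqP xa] a_min.
by split=> // k k_gt0 xk; apply: a_min; rewrite k_gt0 xk eqxx.
Qed.

Lemma unit_order_unit x a : unit_order x a -> x \is a GRing.unit.
Proof.
case=> a_gt0 xa _; apply/unitrP; exists (x ^+ a.-1).
by rewrite -exprS -exprSr prednK.
Qed.

Lemma unit_order_exp_div x a d :
  unit_order x a -> (d %| a)%N -> unit_order (x ^+ (a %/ d)) d.
Proof.
move=> xa d_a; have [a_gt0 xa1 _] := xa.
have d_gt0 : (0 < d)%N by apply: dvdn_gt0 d_a.
split=> //; first by rewrite -exprM divnK.
move=> m m_gt0; rewrite -exprM => /(unit_order_dvd xa).
rewrite -{1}(divnK d_a) dvdn_pmul2l; first exact: dvdn_leq.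
by rewrite divn_gt0 // dvdn_leq.
Qed.

Lemma comm_expr_mul_eq1 x y m b :
  x * y = y * x -> (x * y) ^+ m = 1 -> y ^+ b = 1 -> x ^+ (m * b) = 1.
Proof.
move=> cxy xym yb; have : (x * y) ^+ (m * b) = 1 by rewrite exprM xym expr1n.
by rewrite exprMn_comm // [in y ^+ _]mulnC [y ^+ _]exprM yb expr1n mulr1.
Qed.

Lemma unit_order_mul_coprime x y a b :
  x * y = y * x -> unit_order x a -> unit_order y b -> coprime a b ->
  unit_order (x * y) (a * b).
Proof.
move=> cxy xa yb co_ab; have [a_gt0 xa1 _] := xa; have [b_gt0 yb1 _] := yb.
split; first by rewrite muln_gt0 a_gt0.
  by rewrite exprMn_comm // exprM xa1 expr1n mul1r mulnC exprM yb1 expr1n.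
move=> m m_gt0 xym; apply: dvdn_leq => //; rewrite Gauss_dvd //.
have yxm : (y * x) ^+ m = 1 by rewrite -cxy.
rewrite -(Gauss_dvdl _ co_ab) -(Gauss_dvdl _ (etrans (coprime_sym b a) co_ab)).
rewrite (unit_order_dvd xa (comm_expr_mul_eq1 cxy xym yb1)).
exact: unit_order_dvd yb (comm_expr_mul_eq1 (esym cxy) yxm xa1).
Qed.

End UnitOrder.

(* Split each prime of lcm(a, b) to whichever of a, b carries its full power. *)
Lemma lcmn_coprime_split a b : (0 < a)%N -> (0 < b)%N ->
  exists a1 b1,
    [/\ (a1 %| a)%N, (b1 %| b)%N, coprime a1 b1 & (a1 * b1)%N = lcmn a b].
Proof.
move=> a_gt0 b_gt0; pose pi : nat_pred := [pred p | logn p b <= logn p a]%N.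
have l_gt0 : (0 < lcmn a b)%N by rewrite lcmn_gt0 a_gt0.
exists (a`_pi)%N, (b`_pi^')%N.
split; [exact: dvdn_part | exact: dvdn_part | exact: coprime_partC |].
rewrite -(partnC pi l_gt0); congr (_ * _)%N; apply: eq_partn_from_log => // p.
  by move=> pi_p; rewrite logn_lcm //; apply/esym/maxn_idPl.
rewrite !inE -ltnNge => /ltnW pi'_p.
by rewrite logn_lcm //; apply/esym/maxn_idPr.
Qed.

Lemma unit_order_lcm (R : unitRingType) (x y : R) a b :
  x * y = y * x -> unit_order x a -> unit_order y b ->
  exists i j, unit_order (x ^+ i * y ^+ j) (lcmn a b).
Proof.
move=> cxy xa yb; have [a_gt0 _ _] := xa; have [b_gt0 _ _] := yb.
have [a1 [b1 [a1_a b1_b co_ab <-]]] := lcmn_coprime_split a_gt0 b_gt0.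
exists (a %/ a1)%N, (b %/ b1)%N.
apply: unit_order_mul_coprime co_ab; try exact: unit_order_exp_div.
by apply/commrX/commr_sym/commrX/commr_sym.
Qed.

Lemma unit_order_biglcm (R : unitRingType) k (u : 'I_k -> R) (o : 'I_k -> nat) :
  (forall x y : R, x * y = y * x) -> (forall i, unit_order (u i) (o i)) ->
  exists z : R, unit_order z (\big[lcmn/1%N]_(i < k) o i).
Proof.
move=> mulC; elim: k u o => [|k IHk] u o uo.
  by exists 1; rewrite big_ord0; split=> //; rewrite expr1.
have [z zo] := IHk (fun i => u (widen_ord (leqnSn k) i)) (fun i => o _) (fun i => uo _).
have [i [j zuo]] := unit_order_lcm (mulC z (u ord_max)) zo (uo ord_max).
by exists (z ^+ i * u ord_max ^+ j); rewrite big_ord_recr.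
Qed.

Section TorsionClean.

Variables (strong : bool) (R : unitRingType).

Definition clean_unit (d : nat) (e u : R) : Prop :=
  [/\ idempotent_el e, u \is a GRing.unit, unit_order u d
    & (strong -> e * u = u * e)].

Definition clean_order (d : nat) : Prop := exists e u, clean_unit d e u.

Lemma clean_unit_0_1 : clean_unit 1 0 1.
Proof.
by split; rewrite /idempotent_el ?mul0r ?mulr0 ?unitr1.
Qed.

Lemma torsion_clean_with_lcm m l :
  (0 < m)%N -> torsion_clean_with strong R m ->
  (forall d, (d %| m)%N -> clean_order d -> (d %| l)%N) ->
  torsion_clean_with strong R l.
Proof.
move=> m_gt0 tc_m dvd_l r; have [e [u [e_id u_unit um r_eu eu]]] := tc_m r.
have [d ud] := unit_order_exists m_gt0 um.
have d_l : (d %| l)%N.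
  by apply: dvd_l; [exact: unit_order_dvd ud um | exists e, u].
have [_ ud1 _] := ud.
by exists e, u; split=> //; rewrite -(divnK d_l) mulnC exprM ud1 expr1n.
Qed.

(* Indexing by 'I_n.+1 covers every divisor of n; indices that are not the
   order of a clean unit get the decomposition 0 + 1. *)
Lemma clean_unit_family n :
  exists (e u : 'I_n.+1 -> R) (o : 'I_n.+1 -> nat),
    (forall i, clean_unit (o i) (e i) (u i) /\ (o i %| n)%N) /\
    (forall i : 'I_n.+1, (i %| n)%N -> clean_order i -> o i = i).
Proof.
pose spec (i : 'I_n.+1) (t : R * R * nat) :=
  (clean_unit t.2 t.1.1 t.1.2 /\ (t.2 %| n)%N) /\ ((i %| n)%N -> clean_order i -> t.2 = i).
have [f fP] : exists f, forall i, spec i (f i).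
  apply: functional_choice => i.
  case: (classic ((i %| n)%N /\ clean_order i)) => [[i_n [e [u eu]]] | not_i].
    by exists (e, u, nat_of_ord i).
  exists (0, 1, 1%N); split; first by split; [exact: clean_unit_0_1 | exact: dvd1n].
  by move=> i_n ci; case: not_i.
exists (fun i => (f i).1.1), (fun i => (f i).1.2), (fun i => (f i).2).
by split=> i; case: (fP i).
Qed.

Lemma torsion_clean_biglcm n (o : 'I_n.+1 -> nat) :
  torsion_clean strong R n -> (forall i, (o i %| n)%N) ->
  (forall i : 'I_n.+1, (i %| n)%N -> clean_order i -> o i = i) ->
  n = \big[lcmn/1%N]_(i < n.+1) o i.
Proof.
case=> n_gt0 tc_n n_min o_n o_id.
have L_n : (\big[lcmn/1%N]_(i < n.+1) o i %| n)%N by apply/dvdn_biglcmP.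
apply/eqP; rewrite eqn_leq (dvdn_leq n_gt0 L_n) andbT.
apply: n_min (torsion_clean_with_lcm n_gt0 tc_n _); first exact: dvdn_gt0 L_n.
move=> d d_n cd; have d_lt : (d < n.+1)%N by rewrite ltnS dvdn_leq.
by apply: (biglcmn_sup (Ordinal d_lt)); rewrite // o_id.
Qed.

End TorsionClean.

Theorem lemma1p1 (strong : bool) (R : unitRingType) (n : nat) :
  torsion_clean strong R n ->
  [/\ (exists (k : nat) (e u : 'I_k -> R) (o : 'I_k -> nat),
         (forall i : 'I_k,
            [/\ idempotent_el (e i), u i \is a GRing.unit,
                unit_order (u i) (o i) & (strong -> e i * u i = u i * e i)]) /\
         n = \big[lcmn/1%N]_(i < k) o i),
      (forall s : nat, unit_exponent R s -> (n %| s)%N)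
    & ((forall x y : R, x * y = y * x) ->
         exists u : R, u \is a GRing.unit /\ unit_order u n)].
Proof.
move=> tc_n; have [e [u [o [clean_o o_id]]]] := clean_unit_family strong R n.
have n_lcm : n = \big[lcmn/1%N]_(i < n.+1) o i.
  by apply: torsion_clean_biglcm o_id => // i; case: (clean_o i).
split.
- by exists n.+1, e, u, o; split=> // i; case: (clean_o i).
- move=> s [_ exp_s _]; rewrite n_lcm; apply/dvdn_biglcmP => i _.
  have [[_ ui oi _] _] := clean_o i; exact: unit_order_dvd oi (exp_s _ ui).
- move=> mulC; have uo i : unit_order (u i) (o i) by have [[]] := clean_o i.
  have [z zo] := unit_order_biglcm mulC uo.
  by exists z; rewrite n_lcm; split=> //; exact: unit_order_unit zo.
Qed.
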